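(* Let $n\ge 1$ and $1\le m\le n$. Then the suffix length of $\mathcal{A}(n,m)$ with respect to lexicographic order satisfies $S(n,m) = 2\,|\mathcal{A}(n,m)| - 1$.
   Context: An ascending composition of a positive integer $n$ is a finite sequence of positive integers $(a_1,\dots,a_k)$, $k\ge1$, with $a_1+\dots+a_k=n$ and $a_1\le\dots\le a_k$. For $1\le m\le n$, $\mathcal{A}(n,m)$ is the set of ascending compositions of $n$ with $a_1\ge m$. List the elements of $\mathcal{A}(n,m)$ in increasing lexicographic order as $b^{(1)},\dots,b^{(N)}$. The suffix length $S(n,m)$ is defined as the number of parts of $b^{(1)}$ plus, for each $i=1,\dots,N-1$, the number of parts of $b^{(i+1)}$ lying beyond the longest common prefix of $b^{(i)}$ and $b^{(i+1)}$ (i.e. if the longest common prefix has length $j$ and $b^{(i+1)}$ has $k'$ parts, this contributes $k'-j$). Equivalently, it counts the number of part-writes needed to generate the list when each composition is obtained from the previous one by rewriting only the differing suffix. *)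

From mathcomp Require Import all_boot.
Set Implicit Arguments. Unset Strict Implicit. Unset Printing Implicit Defensive.

Definition asc_comp (n m : nat) (s : seq nat) : bool :=
  [&& 0 < size s, all (fun a => 0 < a) s, sorted leq s, sumn s == n
    & m <= head 0 s].

Fixpoint lex_le (s t : seq nat) : bool :=
  match s, t with
  | [::], _ => true
  | _ :: _, [::] => false
  | x :: s', y :: t' => (x < y) || ((x == y) && lex_le s' t')
  end.

Fixpoint all_seqs (k n : nat) : seq (seq nat) :=
  match k with
  | 0 => [:: [::]]
  | k'.+1 => [::] :: [seq x :: s | x <- iota 1 n, s <- all_seqs k' n]
  end.

(* The set A(n,m), listed in increasing lexicographic order.
   Every ascending composition of n has at most n parts, each <= n,
   so it occurs (exactly once) in all_seqs n n. *)
Definition enumA (n m : nat) : seq (seq nat) :=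
  sort lex_le (filter (asc_comp n m) (all_seqs n n)).

Fixpoint lcp (s t : seq nat) : nat :=
  match s, t with
  | x :: s', y :: t' => if x == y then (lcp s' t').+1 else 0
  | _, _ => 0
  end.

Definition suffix_length (L : seq (seq nat)) : nat :=
  match L with
  | [::] => 0
  | b :: L' => size b + sumn (pairmap (fun u v => size v - lcp u v) b L')
  end.

Definition S (n m : nat) : nat := suffix_length (enumA n m).

(* The lexicographically ordered list of A(n,m) splits as the blocks
   a :: A(n - a, a) for a = m, ..., n - 1, followed by the one-part
   composition [n].  Consecutive blocks share no prefix, and prepending a
   common first part a to a nonempty list raises its suffix length by exactly
   one (only the first element pays for the new part).  By induction, a list
   of N compositions built this way has suffix length 2N - 1: each block
   contributes 2 |A(n - a, a)| and the final [n] contributes 1. *)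

From mathcomp Require Import all_boot zify.

Lemma lex_le_trans : transitive lex_le.
Proof.
move=> t s u; elim: s t u => [|x s IH] [|y t] [|z u] //=.
case/orP=> [ltyx|/andP[/eqP-> le_ts]]; case/orP=> [ltxz|/andP[/eqP<- le_su]].
- by rewrite (ltn_trans ltyx ltxz).
- by rewrite ltyx.
- by rewrite ltxz.
- by rewrite eqxx (IH _ _ le_ts le_su) orbT.
Qed.

Lemma lex_le_anti : antisymmetric lex_le.
Proof.
elim=> [|x s IH] [|y t] //=; case/andP.
case/orP=> [ltxy|/andP[/eqP-> le_st]];
  case/orP=> [ltyx|/andP[/eqP eq_yx le_ts]].
- by have := ltn_trans ltxy ltyx; rewrite ltnn.
- by rewrite eq_yx ltnn in ltxy.
- by rewrite ltnn in ltyx.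
- by rewrite (IH t) // le_st le_ts.
Qed.

Lemma lex_le_total : total lex_le.
Proof. by elim=> [|x s IH] [|y t] //=; case: (ltngtP x y) => //= ->. Qed.

Lemma pairwise_lex_le_map_cons a L :
  pairwise lex_le [seq a :: s | s <- L] = pairwise lex_le L.
Proof.
elim: L => //= x L ->; rewrite all_map; congr (_ && _).
by apply: eq_all => y /=; rewrite ltnn eqxx.
Qed.

(* [asc_enum fuel n m] lists A(n,m) recursively by first part; the fuel
   only has to exceed the depth of the recursion, i.e. [n <= fuel]. *)
Fixpoint asc_enum (fuel n m : nat) : seq (seq nat) :=
  if fuel is fuel'.+1 then
    if n < m then [::] else
      flatten [seq [seq a :: s | s <- asc_enum fuel' (n - a) a]
              | a <- iota m (n - m)] ++ [:: [:: n]]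
  else [::].

Definition asc_blocks (fuel n : nat) (xs : seq nat) : seq (seq nat) :=
  flatten [seq [seq a :: s | s <- asc_enum fuel (n - a) a] | a <- xs].

Lemma asc_enumS fuel n m :
  asc_enum fuel.+1 n m =
  if n < m then [::] else asc_blocks fuel n (iota m (n - m)) ++ [:: [:: n]].
Proof. by []. Qed.

Lemma asc_blocks_cons fuel n a xs :
  asc_blocks fuel n (a :: xs) =
  [seq a :: s | s <- asc_enum fuel (n - a) a] ++ asc_blocks fuel n xs.
Proof. by []. Qed.

Lemma mem_asc_blocks fuel n xs x :
  x \in asc_blocks fuel n xs -> exists a s, x = a :: s /\ a \in xs.
Proof. by case/flatten_mapP=> a xs_a /mapP[s _ ->]; exists a, s. Qed.

Lemma asc_comp_cons n m a s :
  asc_comp n m (a :: s) =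
  [&& 0 < a, m <= a & if s is b :: _ then asc_comp (n - a) a s && (a < n)
                      else n == a].
Proof.
rewrite /asc_comp /=; case: s => [|b s] /=.
  by rewrite andbT addn0 eq_sym [(n == a) && _]andbC.
apply/idP/idP.
- case/and4P=> /and3P[a_gt0 b_gt0 pos_s] /andP[le_ab path_s] /eqP sum_n le_ma.
  rewrite a_gt0 le_ma b_gt0 pos_s path_s le_ab /= andbT.
  by apply/andP; split; [apply/eqP|]; lia.
- case/and4P=> a_gt0 le_ma /and4P[/andP[b_gt0 pos_s] path_s /eqP sum_na le_ab].
  move=> a_lt_n; rewrite a_gt0 b_gt0 pos_s le_ab path_s le_ma /= andbT.
  by apply/eqP; lia.
Qed.

Lemma asc_comp_bound n m s : asc_comp n m s -> m <= n.
Proof.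
case: s => [|a [|b s]]; rewrite ?asc_comp_cons //.
- by case/and3P=> _ le_ma /eqP->.
- by case/and3P=> _ le_ma /andP[_ lt_an]; lia.
Qed.

Lemma mem_asc_enum fuel n m x :
  n <= fuel -> 0 < m -> (x \in asc_enum fuel n m) = asc_comp n m x.
Proof.
elim: fuel n m x => [|fuel IH] n m x n_le_fuel m_gt0.
  by apply/esym/negP => /asc_comp_bound; lia.
rewrite asc_enumS; case: ltnP => [n_lt_m|m_le_n].
  by apply/esym/negP => /asc_comp_bound; lia.
rewrite mem_cat mem_seq1; apply/idP/idP.
- case/orP=> [/flatten_mapP[a /[!mem_iota] a_range /mapP[s s_in ->]]|/eqP->].
    move: s_in; rewrite asc_comp_cons IH; [|lia|lia].
    by case: s => [|b s] // comp_s; rewrite comp_s; lia.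
  by rewrite asc_comp_cons eqxx andbT; lia.
- case: x => [|a [|b s]] //; rewrite asc_comp_cons.
    by case/and3P=> _ _ /eqP->; rewrite eqxx orbT.
  case/and3P=> a_gt0 le_ma /andP[comp_s a_lt_n]; apply/orP; left.
  apply/flatten_mapP; exists a; first by rewrite mem_iota; lia.
  by apply/map_f; rewrite IH //; lia.
Qed.

Lemma asc_blocks_uniq fuel n xs :
  (forall a, uniq (asc_enum fuel (n - a) a)) -> uniq xs ->
  uniq (asc_blocks fuel n xs).
Proof.
move=> enum_uniq; elim: xs => [|a xs IH] //= /andP[a_notin_xs xs_uniq].
rewrite cat_uniq map_inj_uniq; last by move=> u v [].
rewrite enum_uniq IH //= andbT.
apply/hasPn => _ /mem_asc_blocks[b [s [-> b_in]]].
by apply/mapP=> -[t _ [eq_ba _]]; move: a_notin_xs; rewrite -eq_ba b_in.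
Qed.

Lemma asc_enum_uniq fuel n m : uniq (asc_enum fuel n m).
Proof.
elim: fuel n m => [|fuel IH] n m //; rewrite asc_enumS; case: ltnP => // m_le_n.
rewrite cat_uniq asc_blocks_uniq ?iota_uniq //= andbT orbF.
apply/negP => /mem_asc_blocks[a [s [[<- _]]]]; rewrite mem_iota; lia.
Qed.

Lemma asc_blocks_lex_sorted fuel n xs :
  (forall a, pairwise lex_le (asc_enum fuel (n - a) a)) -> sorted ltn xs ->
  pairwise lex_le (asc_blocks fuel n xs).
Proof.
move=> enum_sorted; elim: xs => [|a xs IH] // xs_sorted.
rewrite asc_blocks_cons pairwise_cat pairwise_lex_le_map_cons.
rewrite enum_sorted IH ?(path_sorted xs_sorted) // !andbT.
have /allP a_lt := order_path_min ltn_trans xs_sorted.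
apply/allrelP => _ _ /mapP[s _ ->] /mem_asc_blocks[b [t [-> b_in]]].
by rewrite /= a_lt.
Qed.

Lemma asc_enum_lex_sorted fuel n m : pairwise lex_le (asc_enum fuel n m).
Proof.
elim: fuel n m => [|fuel IH] n m //; rewrite asc_enumS; case: ltnP => // m_le_n.
rewrite pairwise_cat asc_blocks_lex_sorted ?iota_ltn_sorted //= andbT.
apply/allrelP => _ _ /mem_asc_blocks[a [s [-> a_in]]] /[!inE] /eqP->.
by move: a_in; rewrite mem_iota /=; lia.
Qed.

Lemma mem_all_seqs k n s :
  size s <= k -> all (fun a => 0 < a <= n) s -> s \in all_seqs k n.
Proof.
elim: k s => [|k IH] [|a s] //=; rewrite ?mem_head // ltnS => size_s.
case/andP=> a_range s_range; rewrite in_cons; apply/orP; right.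
by apply: (allpairs_f (fun x s => x :: s)); [rewrite mem_iota; lia | apply: IH].
Qed.

Lemma all_seqs_uniq k n : uniq (all_seqs k n).
Proof.
elim: k => [|k IH] //=; apply/andP; split.
  by apply/negP => /allpairsP[[x y] [_ _]].
by apply: allpairs_uniq => [||[x1 y1] [x2 y2] _ _ /= [-> ->]];
  rewrite ?iota_uniq.
Qed.

Lemma size_le_sumn s : all (fun a => 0 < a) s -> size s <= sumn s.
Proof. by elim: s => //= a s IH /andP[a_gt0 /IH]; lia. Qed.

Lemma leq_sumn a s : a \in s -> a <= sumn s.
Proof. by move=> a_in; rewrite (perm_sumn (perm_to_rem a_in)) /= leq_addr. Qed.

Lemma enumA_asc_enum n m : 0 < m -> enumA n m = asc_enum n n m.
Proof.
move=> m_gt0; apply: (sorted_eq lex_le_trans lex_le_anti).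
- exact: sort_sorted lex_le_total _.
- by rewrite (sorted_pairwise lex_le_trans) asc_enum_lex_sorted.
rewrite /enumA perm_sort; apply: uniq_perm.
- exact/filter_uniq/all_seqs_uniq.
- exact: asc_enum_uniq.
move=> s; rewrite mem_filter mem_asc_enum //; apply/andb_idr.
case/and5P=> _ pos_s _ /eqP sum_s _; apply: mem_all_seqs.
  by rewrite -sum_s size_le_sumn.
by apply/allP => a a_in; rewrite (allP pos_s a a_in) -sum_s leq_sumn.
Qed.

(* [writes u L]: the part-writes needed to produce the list L when the
   composition in memory is initially u. *)
Definition writes (u : seq nat) (L : seq (seq nat)) : nat :=
  sumn (pairmap (fun v w => size w - lcp v w) u L).

Lemma writes_cons u x L : writes u (x :: L) = size x - lcp u x + writes x L.
Proof. by []. Qed.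

Lemma suffix_lengthE L : suffix_length L = writes [::] L.
Proof. by case: L => // b L; rewrite writes_cons subn0. Qed.

Lemma writes_cat u L1 L2 :
  writes u (L1 ++ L2) = writes u L1 + writes (last u L1) L2.
Proof. by rewrite /writes pairmap_cat sumn_cat. Qed.

Lemma writes_fresh u L : lcp u (head [::] L) = 0 -> writes u L = writes [::] L.
Proof. by case: L => // x L; rewrite !writes_cons => ->. Qed.

Lemma writes_map_cons_cons a u L :
  writes (a :: u) [seq a :: s | s <- L] = writes u L.
Proof. by elim: L u => //= v L IH u; rewrite !writes_cons IH /= eqxx subSS. Qed.

Lemma writes_map_cons a L :
  writes [::] [seq a :: s | s <- L] = writes [::] L + (L != [::]).
Proof.
case: L => //= x L.
by rewrite !writes_cons writes_map_cons_cons /= !subn0 addn1.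
Qed.

Lemma lcp_last_map_cons a b L t :
  a != b -> lcp (last [::] [seq a :: s | s <- L]) (b :: t) = 0.
Proof.
by case/lastP: L => // L s; rewrite map_rcons last_rcons /= => /negbTE->.
Qed.

Lemma writes_asc_blocks fuel n xs :
  (forall a, writes [::] (asc_enum fuel (n - a) a) =
             (2 * size (asc_enum fuel (n - a) a)).-1) ->
  sorted ltn xs -> all (fun a => a < n) xs ->
  writes [::] (asc_blocks fuel n xs ++ [:: [:: n]]) =
  (2 * size (asc_blocks fuel n xs)).+1.
Proof.
move=> writes_enum; elim: xs => [|a xs IH] // xs_sorted /andP[a_lt_n xs_lt_n].
have /allP a_lt := order_path_min ltn_trans xs_sorted.
set rest := asc_blocks fuel n xs ++ [:: [:: n]].
have fresh_rest :
    lcp (last [::] [seq a :: s | s <- asc_enum fuel (n - a) a])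
        (head [::] rest) = 0.
  have : head [::] rest \in rest.
    by rewrite /rest; case: (asc_blocks _ _ _) => /= *; rewrite mem_head.
  rewrite mem_cat mem_seq1 => /orP[/mem_asc_blocks[b [t [-> b_in]]]|/eqP->].
    by rewrite lcp_last_map_cons // neq_ltn a_lt.
  by rewrite lcp_last_map_cons // neq_ltn a_lt_n.
rewrite asc_blocks_cons -catA writes_cat (writes_fresh _ _ fresh_rest).
rewrite IH ?(path_sorted xs_sorted) // writes_map_cons writes_enum.
by rewrite size_cat size_map; case: (asc_enum _ _ _) => [|? ?] /=; lia.
Qed.

Lemma writes_asc_enum fuel n m :
  writes [::] (asc_enum fuel n m) = (2 * size (asc_enum fuel n m)).-1.
Proof.
elim: fuel n m => [|fuel IH] n m //; rewrite asc_enumS; case: ltnP => // m_le_n.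
rewrite writes_asc_blocks ?iota_ltn_sorted // ?size_cat ?addn1 ?mulnS //.
by apply/allP => a; rewrite mem_iota; lia.
Qed.

Theorem theorem1 (n m : nat) (hn : 1 <= n) (hm1 : 1 <= m) (hmn : m <= n) :
  S n m = 2 * size (enumA n m) - 1.
Proof.
by rewrite /S suffix_lengthE enumA_asc_enum // writes_asc_enum subn1.
Qed.
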